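(* Let $M$ be a circulant $n\times n$ matrix over $\mathbb{Z}_4+u\mathbb{Z}_4$. Then the matrix $[I_n\,|\,M]$ generates a formally self-dual code over $\mathbb{Z}_4+u\mathbb{Z}_4$ (of length $2n$).
   Context: $\mathbb{Z}_4+u\mathbb{Z}_4$ is the commutative ring of characteristic $4$ with $u^2=0$. A linear code of length $N$ is a submodule of $(\mathbb{Z}_4+u\mathbb{Z}_4)^N$; its dual is taken with respect to the Euclidean inner product $\sum_i x_iy_i$ in the ring. The Lee weight on $\mathbb{Z}_4+u\mathbb{Z}_4$ is $w_L(a+ub)=w_L(b)+w_L(a+b)$, where the Lee weight on $\mathbb{Z}_4$ is $0,1,2,1$ for $0,1,2,3$, extended additively to vectors. A linear code is formally self-dual if it has the same Lee weight enumerator as its dual. A circulant matrix is one in which each row is the cyclic shift by one position to the right of the previous row. *)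

From mathcomp Require Import all_boot all_order all_algebra.
Set Implicit Arguments. Unset Strict Implicit. Unset Printing Implicit Defensive.
Import GRing.Theory.
Local Open Scope ring_scope.

(* The ring Z4 + u Z4 (u^2 = 0): the pair (a, b) represents a + u b. *)
Definition Ru : Type := ('Z_4 * 'Z_4)%type.

Definition Ru0 : Ru := (0, 0).
Definition Ru1 : Ru := (1, 0).
Definition Radd (x y : Ru) : Ru := (x.1 + y.1, x.2 + y.2).
(* (a + ub)(c + ud) = ac + u(ad + bc) since u^2 = 0 *)
Definition Rmul (x y : Ru) : Ru := (x.1 * y.1, x.1 * y.2 + x.2 * y.1).
Definition Rsum (I : finType) (f : I -> Ru) : Ru :=
  (\sum_(i : I) (f i).1, \sum_(i : I) (f i).2).

Definition leeZ4 (x : 'Z_4) : nat := minn (x : nat) (4 - x)%N.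
Definition leeR (x : Ru) : nat := (leeZ4 x.2 + leeZ4 (x.1 + x.2)%R)%N.

Definition word (N : nat) := {ffun 'I_N -> Ru}.
Definition leeW (N : nat) (x : word N) : nat := (\sum_(j < N) leeR (x j))%N.

Definition dotR (N : nat) (x y : word N) : Ru := Rsum (fun j : 'I_N => Rmul (x j) (y j)).

Definition gen_code (k N : nat) (G : 'I_k -> 'I_N -> Ru) : {set word N} :=
  [set x : word N | [exists c : {ffun 'I_k -> Ru},
      x == [ffun j => Rsum (fun i : 'I_k => Rmul (c i) (G i j))]]].

Definition dual_code (N : nat) (C : {set word N}) : {set word N} :=
  [set y : word N | [forall x in C, dotR x y == Ru0]].

Definition formally_self_dual (N : nat) (C : {set word N}) : Prop :=
  forall w : nat,
    #|[set x in C | leeW x == w]| = #|[set y in dual_code C | leeW y == w]|.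

Definition circulant (n : nat) (M : 'I_n -> 'I_n -> Ru) : Prop :=
  forall i j : 'I_n, (i.+1 < n)%N -> M (ordS i) (ordS j) = M i j.

Definition id_cat (n : nat) (M : 'I_n -> 'I_n -> Ru) : 'I_n -> 'I_(n + n) -> Ru :=
  fun i j => match split j with
             | inl k => if i == k then Ru1 else Ru0
             | inr k => M i k
             end.

From mathcomp Require Import all_boot all_order all_algebra.
From mathcomp Require Import ring zify.
Set Implicit Arguments. Unset Strict Implicit. Unset Printing Implicit Defensive.
Import GRing.Theory.
Local Open Scope ring_scope.

(* The code generated by [I | M] is C = {(c, cM)}, and y = (y1, y2) lies in its
   dual iff y1 + M y2 = 0.  A circulant M is persymmetric: M i (n-1-l) =
   M l (n-1-i).  Hence, with J reversing coordinates, (x1, x2) |-> (-J x2, J x1)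
   maps C bijectively onto its dual; it only negates and permutes coordinates,
   and the Lee weight is invariant under negation, so it preserves Lee weight. *)

Definition Rneg (x : Ru) : Ru := (- x.1, - x.2).

Lemma Ru_ext (x y : Ru) : x.1 = y.1 -> x.2 = y.2 -> x = y.
Proof. by case: x y => ? ? [? ?] /= -> ->. Qed.

Lemma RmulA x y z : Rmul x (Rmul y z) = Rmul (Rmul x y) z.
Proof. by apply: Ru_ext => /=; ring. Qed.

Lemma RmulC x y : Rmul x y = Rmul y x.
Proof. by apply: Ru_ext => /=; ring. Qed.

Lemma RmulDr x y z : Rmul x (Radd y z) = Radd (Rmul x y) (Rmul x z).
Proof. by apply: Ru_ext => /=; ring. Qed.

Lemma Rmul0r x : Rmul x Ru0 = Ru0.
Proof. by apply: Ru_ext => /=; ring. Qed.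

Lemma RaddNl x : Radd (Rneg x) x = Ru0.
Proof. by apply: Ru_ext => /=; ring. Qed.

Lemma Radd_eq0 x y : Radd x y = Ru0 -> x = Rneg y.
Proof.
case=> /eqP e1 /eqP e2.
by apply: Ru_ext; apply/eqP; rewrite -addr_eq0.
Qed.

Lemma RnegK x : Rneg (Rneg x) = x.
Proof. by apply: Ru_ext; rewrite /= opprK. Qed.

Lemma leeZ4N (a : 'Z_4) : leeZ4 (- a) = leeZ4 a.
Proof. by case: a => [[|[|[|[|m]]]] Hm]. Qed.

Lemma leeRN x : leeR (Rneg x) = leeR x.
Proof. by rewrite /leeR /= -opprD !leeZ4N. Qed.

Lemma eq_Rsum (I : finType) (f g : I -> Ru) : f =1 g -> Rsum f = Rsum g.
Proof. by move=> e; apply: Ru_ext; apply: eq_bigr => i _; rewrite e. Qed.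

Lemma Rsum0 (I : finType) : Rsum (fun _ : I => Ru0) = Ru0.
Proof. by apply: Ru_ext; rewrite /= big1. Qed.

Lemma RsumD (I : finType) (f g : I -> Ru) :
  Rsum (fun i => Radd (f i) (g i)) = Radd (Rsum f) (Rsum g).
Proof. by apply: Ru_ext; rewrite /= big_split. Qed.

Lemma Rmul_sumr (I : finType) a (f : I -> Ru) :
  Rmul a (Rsum f) = Rsum (fun i => Rmul a (f i)).
Proof. by apply: Ru_ext; rewrite /= ?big_split /= ?mulr_sumr. Qed.

Lemma Rmul_suml (I : finType) a (f : I -> Ru) :
  Rmul (Rsum f) a = Rsum (fun i => Rmul (f i) a).
Proof. by apply: Ru_ext; rewrite /= ?big_split /= ?mulr_suml. Qed.

Lemma exchange_Rsum (I J : finType) (F : I -> J -> Ru) :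
  Rsum (fun i => Rsum (fun j => F i j)) = Rsum (fun j => Rsum (fun i => F i j)).
Proof. by apply: Ru_ext; rewrite /= exchange_big. Qed.

Lemma Rsum_split_ord m n (f : 'I_(m + n) -> Ru) :
  Rsum f = Radd (Rsum (fun i => f (lshift n i))) (Rsum (fun i => f (rshift m i))).
Proof. by apply: Ru_ext; rewrite /= big_split_ord. Qed.

Lemma Rsum_rev_ord n (f : 'I_n -> Ru) : Rsum f = Rsum (fun i => f (rev_ord i)).
Proof. by apply: Ru_ext; rewrite /= (reindex_inj rev_ord_inj). Qed.

Lemma Rsum_mul_delta (I : finType) (c : I -> Ru) (k : I) :
  Rsum (fun i => Rmul (c i) (if i == k then Ru1 else Ru0)) = c k.
Proof.
apply: Ru_ext; rewrite /= (bigD1 k) //= eqxx big1 => [|i /negbTE -> /=];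
  by rewrite /Ru1 /Ru0 /=; ring.
Qed.

Lemma circulant_shift n (M : 'I_n -> 'I_n -> Ru) : circulant M ->
  forall k (i j i' j' : 'I_n), val i' = (i + k)%N -> val j' = (j + k)%N ->
  M i' j' = M i j.
Proof.
move=> hM; elim=> [|k IH] i j i' j' ei ej.
  by rewrite !addn0 in ei ej; rewrite (val_inj ei) (val_inj ej).
have hi : (i + k < n)%N by have := ltn_ord i'; rewrite ei; lia.
have hj : (j + k < n)%N by have := ltn_ord j'; rewrite ej; lia.
have hi1 : ((Ordinal hi).+1 < n)%N by have := ltn_ord i'; rewrite ei /=; lia.
have ordS_succ (a : 'I_n) (b : nat) (hb : (b < n)%N) :
    val a = b.+1 -> a = ordS (Ordinal hb).
  move=> ea; apply: val_inj; rewrite /= -ea modn_small //; exact: ltn_ord.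
rewrite -(IH i j (Ordinal hi) (Ordinal hj)) // -(hM _ _ hi1).
have -> : i' = ordS (Ordinal hi) by apply: ordS_succ; rewrite ei addnS.
have -> // : j' = ordS (Ordinal hj) by apply: ordS_succ; rewrite ej addnS.
Qed.

Lemma circulant_persymmetric n (M : 'I_n -> 'I_n -> Ru) : circulant M ->
  forall i l : 'I_n, M i (rev_ord l) = M l (rev_ord i).
Proof.
move=> hM i l; have hl := ltn_ord l; have hi := ltn_ord i.
case: (leqP i l) => h.
  by symmetry; apply: (circulant_shift hM (k := (l - i)%N)) => /=; lia.
by apply: (circulant_shift hM (k := (i - l)%N)) => /=; lia.
Qed.

Lemma split_lshift m n (k : 'I_m) : split (lshift n k) = inl k.
Proof. exact: (unsplitK (inl _ k)). Qed.

Lemma split_rshift m n (k : 'I_n) : split (rshift m k) = inr k.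
Proof. exact: (unsplitK (inr _ k)). Qed.

Section GeneratedCode.

Variables (n : nat) (M : 'I_n -> 'I_n -> Ru).

Definition encode (c : {ffun 'I_n -> Ru}) : word (n + n) :=
  [ffun j => Rsum (fun i => Rmul (c i) (id_cat M i j))].

Lemma encode_lshift c (k : 'I_n) : encode c (lshift n k) = c k.
Proof. by rewrite ffunE /id_cat split_lshift Rsum_mul_delta. Qed.

Lemma encode_rshift c (k : 'I_n) :
  encode c (rshift n k) = Rsum (fun i => Rmul (c i) (M i k)).
Proof. by rewrite ffunE /id_cat split_rshift. Qed.

Lemma gen_codeP x : x \in gen_code (id_cat M) <-> exists c, x = encode c.
Proof.
rewrite inE; split; first by case/existsP => c /eqP ->; exists c.
by case=> c ->; apply/existsP; exists c.
Qed.

Definition row_check (y : word (n + n)) (i : 'I_n) : Ru :=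
  Radd (y (lshift n i)) (Rsum (fun k => Rmul (M i k) (y (rshift n k)))).

Lemma dotR_encode c y :
  dotR (encode c) y = Rsum (fun i => Rmul (c i) (row_check y i)).
Proof.
rewrite /dotR Rsum_split_ord.
under eq_Rsum => i do rewrite encode_lshift.
under [X in Radd _ X]eq_Rsum => k do rewrite encode_rshift Rmul_suml.
under [RHS]eq_Rsum => i do rewrite RmulDr.
rewrite RsumD exchange_Rsum; congr Radd; apply: eq_Rsum => i.
by rewrite Rmul_sumr; apply: eq_Rsum => k; rewrite RmulA.
Qed.

Lemma dual_codeP y :
  y \in dual_code (gen_code (id_cat M)) <-> forall i, row_check y i = Ru0.
Proof.
rewrite inE; split=> [/forall_inP dual_y i | checks].
  set e_i := [ffun j => if j == i then Ru1 else Ru0].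
  have /dual_y : encode e_i \in gen_code (id_cat M) by apply/gen_codeP; exists e_i.
  rewrite dotR_encode => /eqP <-.
  by under [RHS]eq_Rsum => l do rewrite ffunE RmulC; rewrite Rsum_mul_delta.
apply/forall_inP => x /gen_codeP [c ->]; rewrite dotR_encode.
by under eq_Rsum => i do rewrite checks Rmul0r; rewrite Rsum0.
Qed.

End GeneratedCode.

Section Twist.

Variable n : nat.

Definition twist (x : word (n + n)) : word (n + n) :=
  [ffun j => match split j with
             | inl i => Rneg (x (rshift n (rev_ord i)))
             | inr k => x (lshift n (rev_ord k)) end].

Definition untwist (y : word (n + n)) : word (n + n) :=
  [ffun j => match split j with
             | inl i => y (rshift n (rev_ord i))
             | inr k => Rneg (y (lshift n (rev_ord k))) end].

Lemma twist_lshift x i : twist x (lshift n i) = Rneg (x (rshift n (rev_ord i))).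
Proof. by rewrite ffunE split_lshift. Qed.

Lemma twist_rshift x i : twist x (rshift n i) = x (lshift n (rev_ord i)).
Proof. by rewrite ffunE split_rshift. Qed.

Lemma untwist_lshift y i : untwist y (lshift n i) = y (rshift n (rev_ord i)).
Proof. by rewrite ffunE split_lshift. Qed.

Lemma untwist_rshift y i : untwist y (rshift n i) = Rneg (y (lshift n (rev_ord i))).
Proof. by rewrite ffunE split_rshift. Qed.

Lemma twistK : cancel twist untwist.
Proof.
move=> x; apply/ffunP => j; case: (split_ordP j) => i ->.
  by rewrite untwist_lshift twist_rshift rev_ordK.
by rewrite untwist_rshift twist_lshift rev_ordK RnegK.
Qed.

Lemma untwistK : cancel untwist twist.
Proof.
move=> y; apply/ffunP => j; case: (split_ordP j) => i ->.
  by rewrite twist_lshift untwist_rshift rev_ordK RnegK.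
by rewrite twist_rshift untwist_lshift rev_ordK.
Qed.

Lemma leeW_twist x : leeW (twist x) = leeW x.
Proof.
rewrite /leeW !big_split_ord /= [RHS]addnC.
congr addn; rewrite [LHS](reindex_inj rev_ord_inj); apply: eq_bigr => i _.
  by rewrite twist_lshift rev_ordK leeRN.
by rewrite twist_rshift rev_ordK.
Qed.

Variable M : 'I_n -> 'I_n -> Ru.
Hypothesis circM : circulant M.

Lemma twist_code x :
  x \in gen_code (id_cat M) -> twist x \in dual_code (gen_code (id_cat M)).
Proof.
move=> /gen_codeP [c ->]; apply/dual_codeP => i.
rewrite /row_check twist_lshift encode_rshift.
under [X in Radd _ X]eq_Rsum => k do rewrite twist_rshift encode_lshift.
rewrite [X in Radd _ X]Rsum_rev_ord.
under [X in Radd _ X]eq_Rsum => k do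
  rewrite rev_ordK circulant_persymmetric // RmulC.
exact: RaddNl.
Qed.

Lemma untwist_dual y :
  y \in dual_code (gen_code (id_cat M)) -> untwist y \in gen_code (id_cat M).
Proof.
move=> /dual_codeP checks; apply/gen_codeP.
exists [ffun i => y (rshift n (rev_ord i))].
apply/ffunP => j; case: (split_ordP j) => k ->.
  by rewrite untwist_lshift encode_lshift ffunE.
rewrite untwist_rshift encode_rshift (Radd_eq0 (checks (rev_ord k))) RnegK.
rewrite Rsum_rev_ord; apply: eq_Rsum => i.
by rewrite ffunE RmulC circulant_persymmetric // rev_ordK.
Qed.

End Twist.

Lemma formally_self_dual_bij N (C : {set word N}) (f g : word N -> word N) :
  cancel f g -> cancel g f -> (forall x, leeW (f x) = leeW x) ->
  {in C, forall x, f x \in dual_code C} ->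
  {in dual_code C, forall y, g y \in C} ->
  formally_self_dual C.
Proof.
move=> fK gK leeW_f f_dual g_code w.
rewrite -(card_imset [set x in C | leeW x == w] (can_inj fK)).
apply: eq_card => y; apply/imsetP/setIdP.
  case=> x /setIdP [xC /eqP <-] ->.
  by split; [exact: f_dual | rewrite leeW_f].
case=> yD /eqP yw; exists (g y); last by rewrite gK.
by apply/setIdP; split; [exact: g_code | rewrite -leeW_f gK yw].
Qed.

Theorem theorem5p2 (n : nat) (M : 'I_n -> 'I_n -> Ru) :
  circulant M -> formally_self_dual (gen_code (id_cat M)).
Proof.
move=> circM.
apply: (formally_self_dual_bij (@twistK n) (@untwistK n) (@leeW_twist n)).
  exact: twist_code.
exact: untwist_dual.
Qed.
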